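(* Let $m\ge 2$ inputs have positive sizes $w_1,\dots,w_m$ with $s=\sum_{i=1}^m w_i$, and let $q>0$ be the reducer capacity. Then every A2A mapping schema for these inputs with capacity $q$ has communication cost at least $\frac{s^2}{q}$ and uses at least $\frac{s^2}{q^2}$ reducers.
   Context: An A2A mapping schema for inputs $i_1,\dots,i_m$ with sizes $w_1,\dots,w_m$ and capacity $q$ is an assignment of the inputs to a collection of reducers (each input may be assigned to several reducers) such that (1) every reducer is assigned inputs whose total size is at most $q$, and (2) every pair of distinct inputs is assigned together to at least one reducer. The communication cost of a mapping schema is the sum, over all reducers, of the total size of the inputs assigned to that reducer (equivalently $\sum_i w_i\cdot r_i$, where $r_i$ is the number of reducers input $i$ is assigned to). *)

From mathcomp Require Import all_boot all_order all_algebra.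
Set Implicit Arguments. Unset Strict Implicit. Unset Printing Implicit Defensive.
Import Order.TTheory GRing.Theory Num.Theory.
Local Open Scope ring_scope.

(* Inputs are indexed by 'I_m, with sizes w : 'I_m -> R.
   A mapping schema is a finite list of reducers; each reducer is the set
   of inputs assigned to it. *)

Definition load (R : numDomainType) (m : nat) (w : 'I_m -> R) (r : {set 'I_m}) : R :=
  \sum_(i in r) w i.

Definition is_A2A_schema (R : numDomainType) (m : nat) (w : 'I_m -> R) (q : R)
    (rs : seq {set 'I_m}) : Prop :=
  (forall r, r \in rs -> load w r <= q) /\
  (forall i j : 'I_m, i != j -> exists2 r, r \in rs & (i \in r) && (j \in r)).

Definition comm_cost (R : numDomainType) (m : nat) (w : 'I_m -> R)
    (rs : seq {set 'I_m}) : R :=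
  \sum_(r <- rs) load w r.

From mathcomp Require Import all_boot all_order all_algebra.
Set Implicit Arguments. Unset Strict Implicit. Unset Printing Implicit Defensive.
Import Order.TTheory GRing.Theory Num.Theory.
Local Open Scope ring_scope.

(* Let r_i be the number of reducers receiving input i. Since i must meet every
   input (itself included, which uses m >= 2), the reducers containing i
   together hold all the inputs, so s <= q r_i. The cost is the weighted sum of the r_i, hence at least
   s (s / q); and each reducer contributes at most q to the cost, so there are
   at least (s^2 / q) / q of them. *)

Definition replication (m : nat) (rs : seq {set 'I_m}) (i : 'I_m) : nat :=
  count (fun r : {set 'I_m} => i \in r) rs.

Lemma sumr_const_seq (V : nmodType) (I : Type) (s : seq I) (P : pred I) (x : V) :
  \sum_(i <- s | P i) x = x *+ count P s.
Proof. by rewrite -sum1_count -sumrMnr; apply: eq_bigr. Qed.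

Lemma load_mkcond (R : numDomainType) (m : nat) (w : 'I_m -> R) (r : {set 'I_m}) :
  load w r = \sum_j (if j \in r then w j else 0).
Proof. exact: big_mkcond. Qed.

Lemma comm_cost_replication (R : numDomainType) (m : nat) (w : 'I_m -> R)
    (rs : seq {set 'I_m}) :
  comm_cost w rs = \sum_i w i *+ replication rs i.
Proof.
rewrite /comm_cost; under eq_bigr do rewrite load_mkcond.
rewrite exchange_big; apply: eq_bigr => i _.
by rewrite -big_mkcond sumr_const_seq.
Qed.

Lemma comm_cost_le_size (R : numDomainType) (m : nat) (w : 'I_m -> R) (q : R)
    (rs : seq {set 'I_m}) :
  (forall r, r \in rs -> load w r <= q) -> comm_cost w rs <= q *+ size rs.
Proof.
move=> cap; rewrite -count_predT -sumr_const_seq /comm_cost.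
by rewrite big_seq [X in _ <= X]big_seq; apply: ler_sum.
Qed.

Lemma A2A_schema_meets (R : numDomainType) (m : nat) (w : 'I_m -> R) (q : R)
    (rs : seq {set 'I_m}) :
  (2 <= m)%N -> is_A2A_schema w q rs ->
  forall i j : 'I_m, exists2 r, r \in rs & (i \in r) && (j \in r).
Proof.
move=> m2 [_ pairs] i j; have [<-{j}|] := eqVneq i j; last exact: pairs.
have [k ik] : exists k : 'I_m, i != k.
  have [->|] := eqVneq i (Ordinal (ltnW m2)); last by exists (Ordinal (ltnW m2)).
  by exists (Ordinal m2); apply/eqP => /(congr1 val).
by have [r rs_r /andP[ir _]] := pairs i k ik; exists r; rewrite ?ir.
Qed.

Lemma sum_le_replication (R : numDomainType) (m : nat) (w : 'I_m -> R) (q : R)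
    (rs : seq {set 'I_m}) (i : 'I_m) :
  (forall j, 0 <= w j) -> (forall r, r \in rs -> load w r <= q) ->
  (forall j, exists2 r, r \in rs & (i \in r) && (j \in r)) ->
  \sum_j w j <= q *+ replication rs i.
Proof.
move=> w_ge0 cap meets.
have covered : \sum_j w j <= \sum_(r <- rs | i \in r) load w r.
  under [X in _ <= X]eq_bigr do rewrite load_mkcond.
  rewrite exchange_big; apply: ler_sum => j _.
  have [r rs_r /andP[ir jr]] := meets j.
  rewrite (big_rem r) //= ir jr lerDl.
  by apply: sumr_ge0 => r' _; case: ifP.
apply: (le_trans covered); rewrite -sumr_const_seq big_seq_cond.
rewrite [X in _ <= X]big_seq_cond.
by apply: ler_sum => r /andP[rs_r _]; apply: cap.
Qed.

Theorem theorem3 (R : realFieldType) (m : nat) (w : 'I_m -> R) (q : R)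
    (rs : seq {set 'I_m}) :
  (2 <= m)%N ->
  (forall i, 0 < w i) ->
  0 < q ->
  is_A2A_schema w q rs ->
  let s := \sum_(i < m) w i in
  s ^+ 2 / q <= comm_cost w rs /\ s ^+ 2 / q ^+ 2 <= (size rs)%:R.
Proof.
move=> m2 w_gt0 q_gt0 schema s.
have w_ge0 j : 0 <= w j by exact: ltW.
have cap := schema.1.
have cost_ge : s ^+ 2 / q <= comm_cost w rs.
  rewrite comm_cost_replication expr2 -mulrA (mulr_suml _ _ _ (s / q)).
  apply: ler_sum => i _; rewrite -mulr_natr ler_wpM2l // ler_pdivrMr // mulr_natl.
  by apply: sum_le_replication => //; exact: A2A_schema_meets m2 schema i.
split=> //; rewrite [q ^+ 2]expr2 invfM mulrA ler_pdivrMr // mulr_natl.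
exact: le_trans cost_ge (comm_cost_le_size cap).
Qed.
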